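(* Let $P$ be a function-free program and $G$ a goal. If $EVR_L$ prunes every infinite SLD derivation of $G$ in $P$, independently of the selection rule used, then $EVR_L$ prunes every infinite RSLD derivation of $G$ in $P$.
   Context: Goals are finite lists of atoms; a clause is $h\leftarrow B$; a program is a finite set of clauses; function-free means no function symbols of positive arity occur. $N\subseteq_L G$ means $N$ is a subsequence of $G$, $G-N$ is the list of deleted atoms, $=_L$ is equality as lists. If $G=a_1,\dots,a_k$, $c=(h\leftarrow B)$, $\xi$ a renaming and $\theta$ an idempotent relevant mgu of $h\xi$ and some $a_i$, then $(a_1,\dots,a_{i-1},B\xi,a_{i+1},\dots,a_k)\theta$ is a resolvent. An SLD derivation of $G_0$ in $P$ is a finite or infinite sequence $G_0\xrightarrow{c_0\xi_0,\theta_0}G_1\xrightarrow{c_1\xi_1,\theta_1}\cdots$ of such steps with $c_j\in P$ and $var(c_j\xi_j)\cap(var(G_0)\cup var(c_0\xi_0)\cup\dots\cup var(c_{j-1}\xi_{j-1}))=\emptyset$. Reduced goal: $G>>^{\tau}N$ up to variable set $X$ if (i) $N\subseteq_L G$, (ii) for each atom $b$ of $G-N$, $b\tau$ occurs in $N$, (iii) $x\tau=x$ for all $x\in var(N)\cup X$. RSLD derivation: $G_0>>^{\alpha_0}N_0\xrightarrow{c_0\xi_0,\theta_0}G_1>>^{\alpha_1}N_1\xrightarrow{c_1\xi_1,\theta_1}G_2\cdots$ where each $N_j\xrightarrow{c_j\xi_j,\theta_j}G_{j+1}$ is an SLD step with $c_j\in P$ and the standardisation-apart condition above, and $G_j>>^{\alpha_j}N_j$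 up to $var(G_0\theta_0\cdots\theta_{j-1})$. (An SLD derivation is the special case $N_j=G_j$.) $EVR_L$ check: an RSLD derivation is pruned by $EVR_L$ if there exist $0\le i<j$ and a renaming $\tau$ with $G_0\theta_0\cdots\theta_{j-1}=G_0\theta_0\cdots\theta_{i-1}\tau$ and $N_j=_L N_i\tau$. *)

From Stdlib Require Import List.
Import ListNotations.

(* Terms may in general contain function symbols of
   any arity; "function-free" is a predicate below. *)
Definition var := nat.

Inductive term : Type :=
| Var : var -> term
| Fn : nat -> list term -> term.

Record atom : Type := mkAtom { apred : nat ; aargs : list term }.

Definition goal := list atom.

Record clause : Type := mkClause { chead : atom ; cbody : list atom }.

Definition program := list clause.

Fixpoint tvars (t : term) : list var :=
  match t with
  | Var x => [x]
  | Fn _ ts => (fix go (l : list term) : list var :=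
                  match l with [] => [] | u :: l' => tvars u ++ go l' end) ts
  end.

Definition avars (a : atom) : list var := flat_map tvars (aargs a).
Definition gvars (g : goal) : list var := flat_map avars g.
Definition cvars (c : clause) : list var := avars (chead c) ++ gvars (cbody c).

Definition ff_term (t : term) : Prop :=
  match t with Var _ => True | Fn _ ts => ts = [] end.
Definition ff_atom (a : atom) : Prop := Forall ff_term (aargs a).
Definition ff_goal (g : goal) : Prop := Forall ff_atom g.
Definition ff_clause (c : clause) : Prop := ff_atom (chead c) /\ ff_goal (cbody c).
Definition ff_program (P : program) : Prop := Forall ff_clause P.

Definition subst := var -> term.

Fixpoint tsubst (s : subst) (t : term) : term :=
  match t with
  | Var x => s x
  | Fn f ts => Fn f (map (tsubst s) ts)
  end.

Definition asubst (s : subst) (a : atom) : atom :=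
  mkAtom (apred a) (map (tsubst s) (aargs a)).
Definition gsubst (s : subst) (g : goal) : goal := map (asubst s) g.
Definition csubst (s : subst) (c : clause) : clause :=
  mkClause (asubst s (chead c)) (gsubst s (cbody c)).

Definition renaming (s : subst) : Prop :=
  exists (f g : var -> var) (supp : list var),
    (forall x, g (f x) = x) /\ (forall x, f (g x) = x) /\
    (forall x, ~ In x supp -> f x = x) /\
    (forall x, s x = Var (f x)).

Definition unifier (th : subst) (a1 a2 : atom) : Prop :=
  asubst th a1 = asubst th a2.

Definition mgu (th : subst) (a1 a2 : atom) : Prop :=
  unifier th a1 a2 /\
  forall sg, unifier sg a1 a2 ->
    exists dl : subst, forall x, sg x = tsubst dl (th x).

Definition idempotent (th : subst) : Prop :=
  forall x, tsubst th (th x) = th x.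

Definition relevant (th : subst) (a1 a2 : atom) : Prop :=
  forall x, th x <> Var x ->
    (In x (avars a1 ++ avars a2)) /\
    (forall y, In y (tvars (th x)) -> In y (avars a1 ++ avars a2)).

Definition resolvent (G : goal) (c : clause) (xi th : subst) (G' : goal) : Prop :=
  renaming xi /\
  exists (pre : goal) (a : atom) (post : goal),
    G = pre ++ a :: post /\
    mgu th (asubst xi (chead c)) a /\ idempotent th /\
    relevant th (asubst xi (chead c)) a /\
    G' = gsubst th (pre ++ gsubst xi (cbody c) ++ post).

Definition std_apart (G0 : goal) (c : nat -> clause) (xi : nat -> subst) (j : nat) : Prop :=
  forall x, In x (cvars (csubst (xi j) (c j))) ->
    ~ In x (gvars G0) /\
    (forall k, k < j -> ~ In x (cvars (csubst (xi k) (c k)))).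

Fixpoint inst_upto (G0 : goal) (th : nat -> subst) (j : nat) : goal :=
  match j with
  | O => G0
  | S j' => gsubst (th j') (inst_upto G0 th j')
  end.

Definition inf_SLD (P : program) (G0 : goal) (Gs : nat -> goal)
    (c : nat -> clause) (xi th : nat -> subst) : Prop :=
  Gs 0 = G0 /\
  forall j, In (c j) P /\ std_apart G0 c xi j /\
            resolvent (Gs j) (c j) (xi j) (th j) (Gs (S j)).

Inductive sublist : goal -> goal -> goal -> Prop :=
| sl_nil : sublist [] [] []
| sl_keep : forall a N G D, sublist N G D -> sublist (a :: N) (a :: G) D
| sl_drop : forall a N G D, sublist N G D -> sublist N (a :: G) (a :: D).

Definition reduced (G : goal) (tau : subst) (N : goal) (X : list var) : Prop :=
  exists D, sublist N G D /\
    (forall b, In b D -> In (asubst tau b) N) /\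
    (forall x, In x (gvars N) \/ In x X -> tau x = Var x).

Definition inf_RSLD (P : program) (G0 : goal) (Gs Ns : nat -> goal)
    (al : nat -> subst) (c : nat -> clause) (xi th : nat -> subst) : Prop :=
  Gs 0 = G0 /\
  forall j, reduced (Gs j) (al j) (Ns j) (gvars (inst_upto G0 th j)) /\
            In (c j) P /\ std_apart G0 c xi j /\
            resolvent (Ns j) (c j) (xi j) (th j) (Gs (S j)).

Definition EVR_L_prunes (G0 : goal) (th : nat -> subst) (Ns : nat -> goal) : Prop :=
  exists i j tau, i < j /\ renaming tau /\
    inst_upto G0 th j = gsubst tau (inst_upto G0 th i) /\
    Ns j = gsubst tau (Ns i).

(* If the reduced goals N_j are short infinitely often, then, the program being function-free,
   the pairs (G0 th_0 ... th_(j-1), N_j) range over finitely many classes up to renaming, so two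
   of them are variants and EVR_L prunes the RSLD derivation.  Otherwise |N_j| diverges.
   Resolving the same atoms in the unreduced goals gives an SLD derivation whose goals contain
   the N_j as subsequences, so its goal lengths diverge too.  Such an SLD derivation yields one
   that EVR_L never prunes: from each state jump to its last variant (which exists because goal
   lengths diverge) and rename apart; in the resulting derivation no state is a variant of an
   earlier one, contradicting the hypothesis. *)

From Stdlib Require Import List Arith Lia Classical ClassicalEpsilon FunctionalExtensionality.
Import ListNotations.

Lemma term_ind' (P : term -> Prop) :
  (forall x, P (Var x)) ->
  (forall f ts, Forall P ts -> P (Fn f ts)) -> forall t, P t.
Proof.
  intros HV HF. fix IH 1. intros [x|f ts]. { apply HV. } apply HF.
  induction ts as [|u ts IHts]; constructor; [apply IH | exact IHts].
Qed.

Lemma tvars_Fn f ts : tvars (Fn f ts) = flat_map tvars ts.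
Proof. simpl. induction ts as [|u ts IH]; simpl; [reflexivity | now f_equal]. Qed.

Definition scomp (s2 s1 : subst) : subst := fun x => tsubst s2 (s1 x).

Lemma tsubst_comp s2 s1 t : tsubst s2 (tsubst s1 t) = tsubst (scomp s2 s1) t.
Proof.
  induction t as [x|f ts IH] using term_ind'; simpl; auto.
  f_equal. rewrite map_map. apply map_ext_in. intros u Hu.
  rewrite Forall_forall in IH. auto.
Qed.

Lemma tsubst_ext s1 s2 t : (forall x, In x (tvars t) -> s1 x = s2 x) ->
  tsubst s1 t = tsubst s2 t.
Proof.
  induction t as [x|f ts IH] using term_ind'; intros H; simpl.
  - apply H. simpl; auto.
  - f_equal. apply map_ext_in. intros u Hu. rewrite Forall_forall in IH.
    apply IH; auto. intros x Hx. apply H. rewrite tvars_Fn. apply in_flat_map. eauto.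
Qed.

Lemma tsubst_var t : tsubst Var t = t.
Proof.
  induction t as [x|f ts IH] using term_ind'; simpl; auto. f_equal.
  rewrite Forall_forall in IH. rewrite <- (map_id ts) at 2. apply map_ext_in; auto.
Qed.

Lemma tvars_tsubst s t y : In y (tvars (tsubst s t)) <->
  exists x, In x (tvars t) /\ In y (tvars (s x)).
Proof.
  induction t as [x|f ts IH] using term_ind'.
  - simpl. split.
    + intros H; exists x; simpl; auto.
    + intros [x' [[<-|[]] H]]; auto.
  - cbn [tsubst]. rewrite tvars_Fn, in_flat_map. rewrite Forall_forall in IH. split.
    + intros [u [Hu Hy]]. apply in_map_iff in Hu as [v [<- Hv]].
      apply IH in Hy as [x [Hx Hy]]; auto. exists x; split; auto.
      rewrite tvars_Fn, in_flat_map. eauto.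
    + intros [x [Hx Hy]]. rewrite tvars_Fn, in_flat_map in Hx. destruct Hx as [v [Hv Hx]].
      exists (tsubst s v). split; [apply in_map; auto | apply IH; eauto].
Qed.

Lemma asubst_comp s2 s1 a : asubst s2 (asubst s1 a) = asubst (scomp s2 s1) a.
Proof.
  unfold asubst; simpl. f_equal. rewrite map_map. apply map_ext. intros; apply tsubst_comp.
Qed.

Lemma gsubst_comp s2 s1 g : gsubst s2 (gsubst s1 g) = gsubst (scomp s2 s1) g.
Proof. unfold gsubst. rewrite map_map. apply map_ext. intros; apply asubst_comp. Qed.

Lemma asubst_ext s1 s2 a : (forall x, In x (avars a) -> s1 x = s2 x) ->
  asubst s1 a = asubst s2 a.
Proof.
  intros H. unfold asubst. f_equal. apply map_ext_in. intros t Ht. apply tsubst_ext.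
  intros x Hx. apply H. unfold avars. apply in_flat_map; eauto.
Qed.

Lemma gsubst_ext s1 s2 g : (forall x, In x (gvars g) -> s1 x = s2 x) ->
  gsubst s1 g = gsubst s2 g.
Proof.
  intros H. unfold gsubst. apply map_ext_in. intros a Ha. apply asubst_ext.
  intros x Hx. apply H. unfold gvars. apply in_flat_map; eauto.
Qed.

Lemma gsubst_var g : gsubst Var g = g.
Proof.
  unfold gsubst. rewrite <- (map_id g) at 2. apply map_ext. intros [p ts]. unfold asubst; simpl.
  f_equal. rewrite <- (map_id ts) at 2. apply map_ext. apply tsubst_var.
Qed.

Lemma gsubst_app s g1 g2 : gsubst s (g1 ++ g2) = gsubst s g1 ++ gsubst s g2.
Proof. apply map_app. Qed.

Lemma gvars_app g1 g2 : gvars (g1 ++ g2) = gvars g1 ++ gvars g2.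
Proof. apply flat_map_app. Qed.

Lemma gvars_cons a g : gvars (a :: g) = avars a ++ gvars g.
Proof. reflexivity. Qed.

Lemma avars_asubst s a y : In y (avars (asubst s a)) <->
  exists x, In x (avars a) /\ In y (tvars (s x)).
Proof.
  unfold avars, asubst; simpl. rewrite in_flat_map. split.
  - intros [u [Hu Hy]]. apply in_map_iff in Hu as [v [<- Hv]].
    apply tvars_tsubst in Hy as [x [Hx Hy]]. exists x; split; auto. apply in_flat_map; eauto.
  - intros [x [Hx Hy]]. apply in_flat_map in Hx as [v [Hv Hx]]. exists (tsubst s v).
    split; [apply in_map; auto | apply tvars_tsubst; eauto].
Qed.

Lemma gvars_gsubst s g y : In y (gvars (gsubst s g)) <->
  exists x, In x (gvars g) /\ In y (tvars (s x)).
Proof.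
  unfold gvars, gsubst. rewrite in_flat_map. split.
  - intros [u [Hu Hy]]. apply in_map_iff in Hu as [v [<- Hv]].
    apply avars_asubst in Hy as [x [Hx Hy]]. exists x; split; auto. apply in_flat_map; eauto.
  - intros [x [Hx Hy]]. apply in_flat_map in Hx as [v [Hv Hx]]. exists (asubst s v).
    split; [apply in_map; auto | apply avars_asubst; eauto].
Qed.

Lemma length_gsubst s g : length (gsubst s g) = length g.
Proof. apply length_map. Qed.

Lemma cvars_csubst s c :
  cvars (csubst s c) = avars (asubst s (chead c)) ++ gvars (gsubst s (cbody c)).
Proof. reflexivity. Qed.

(** * Renamings *)

Record ren := {
  ren_fun : var -> var;
  ren_inv : var -> var;
  ren_supp : list var;
  ren_funK : forall x, ren_inv (ren_fun x) = x;
  ren_invK : forall x, ren_fun (ren_inv x) = x;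
  ren_out : forall x, ~ In x ren_supp -> ren_fun x = x }.

Definition ren_subst (r : ren) : subst := fun x => Var (ren_fun r x).

Lemma renaming_ren_subst r : renaming (ren_subst r).
Proof.
  exists (ren_fun r), (ren_inv r), (ren_supp r).
  split; [|split; [|split]]; intros; auto using ren_funK, ren_invK, ren_out.
Qed.

Lemma renaming_ren s : renaming s -> exists r, s = ren_subst r.
Proof.
  intros [f [g [supp [H1 [H2 [H3 H4]]]]]].
  exists (Build_ren f g supp H1 H2 H3). apply functional_extensionality. intros x. apply H4.
Qed.

Program Definition ren_comp (r2 r1 : ren) : ren :=
  {| ren_fun := fun x => ren_fun r2 (ren_fun r1 x);
     ren_inv := fun x => ren_inv r1 (ren_inv r2 x);
     ren_supp := ren_supp r1 ++ ren_supp r2 |}.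
Next Obligation. rewrite !ren_funK; auto. Qed.
Next Obligation. rewrite !ren_invK; auto. Qed.
Next Obligation.
  rewrite in_app_iff in H. rewrite (ren_out r1 x), (ren_out r2 x); auto.
Qed.

Program Definition ren_inverse (r : ren) : ren :=
  {| ren_fun := ren_inv r; ren_inv := ren_fun r; ren_supp := ren_supp r |}.
Next Obligation. apply ren_invK. Qed.
Next Obligation. apply ren_funK. Qed.
Next Obligation. rewrite <- (ren_out r x H) at 1. apply ren_funK. Qed.

Program Definition ren_id : ren := {| ren_fun := fun x => x; ren_inv := fun x => x; ren_supp := [] |}.

Definition swap (a b z : var) : var :=
  if Nat.eq_dec z a then b else if Nat.eq_dec z b then a else z.

Lemma swapK a b z : swap a b (swap a b z) = z.
Proof. unfold swap. repeat (destruct Nat.eq_dec; subst; try congruence). Qed.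

Program Definition ren_swap (a b : var) : ren :=
  {| ren_fun := swap a b; ren_inv := swap a b; ren_supp := [a; b] |}.
Next Obligation. apply swapK. Qed.
Next Obligation. apply swapK. Qed.
Next Obligation.
  unfold swap. simpl in H. repeat (destruct Nat.eq_dec; [exfalso; auto|]). reflexivity.
Qed.

Lemma ren_subst_comp r2 r1 : scomp (ren_subst r2) (ren_subst r1) = ren_subst (ren_comp r2 r1).
Proof. reflexivity. Qed.

Lemma ren_fun_inj r x y : ren_fun r x = ren_fun r y -> x = y.
Proof. intros H. rewrite <- (ren_funK r x), <- (ren_funK r y), H. reflexivity. Qed.

Lemma tsubst_renK r t : tsubst (ren_subst (ren_inverse r)) (tsubst (ren_subst r) t) = t.
Proof.
  rewrite tsubst_comp. rewrite <- (tsubst_var t) at 2. apply tsubst_ext.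
  intros x _. unfold scomp, ren_subst; simpl. rewrite ren_funK. reflexivity.
Qed.

Lemma gsubst_renK r g : gsubst (ren_subst (ren_inverse r)) (gsubst (ren_subst r) g) = g.
Proof.
  rewrite gsubst_comp. rewrite <- (gsubst_var g) at 2. apply gsubst_ext.
  intros x _. unfold scomp, ren_subst; simpl. rewrite ren_funK. reflexivity.
Qed.

Lemma gvars_ren r g y :
  In y (gvars (gsubst (ren_subst r) g)) <-> exists x, In x (gvars g) /\ y = ren_fun r x.
Proof.
  rewrite gvars_gsubst. unfold ren_subst; simpl. split.
  - intros [x [Hx [<-|[]]]]; eauto.
  - intros [x [Hx ->]]; eauto.
Qed.

Lemma cvars_ren s r c y : In y (cvars (csubst (scomp (ren_subst r) s) c)) <->
  exists x, In x (cvars (csubst s c)) /\ y = ren_fun r x.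
Proof.
  rewrite !cvars_csubst, !in_app_iff, <- asubst_comp, <- gsubst_comp.
  rewrite avars_asubst, gvars_gsubst. unfold ren_subst; simpl. split.
  - intros [[x [Hx [<-|[]]]]|[x [Hx [<-|[]]]]]; exists x; split; auto; apply in_app_iff; auto.
  - intros [x [Hx ->]]. apply in_app_iff in Hx as [Hx|Hx]; [left|right]; exists x; simpl; auto.
Qed.

Lemma renaming_scomp r s : renaming s -> renaming (scomp (ren_subst r) s).
Proof.
  intros Hs. destruct (renaming_ren s Hs) as [r' ->].
  rewrite ren_subst_comp. apply renaming_ren_subst.
Qed.

(* Swapping one pair at a time, any finite injective partial map extends to a renaming. *)
Lemma ren_extend (ps : list (var * var)) : NoDup (map fst ps) -> NoDup (map snd ps) ->
  exists r, forall p, In p ps -> ren_fun r (fst p) = snd p.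
Proof.
  induction ps as [|[x y] ps IH]; simpl; intros H1 H2.
  - exists ren_id. intros _ [].
  - inversion H1 as [|? ? Hx1 Hx2]; inversion H2 as [|? ? Hy1 Hy2]; subst.
    destruct IH as [r Hr]; auto.
    exists (ren_comp (ren_swap y (ren_fun r x)) r). intros [x' y'] [E|Hin]; simpl.
    + inversion E; subst. unfold swap. destruct Nat.eq_dec; auto.
      destruct Nat.eq_dec; congruence.
    + pose proof (Hr _ Hin) as E; simpl in E. rewrite E. unfold swap.
      destruct Nat.eq_dec as [e0|].
      { exfalso. apply Hy1. rewrite <- e0. apply in_map_iff. exists (x', y'); auto. }
      destruct Nat.eq_dec as [e1|]; auto. exfalso. rewrite <- E in e1.
      apply ren_fun_inj in e1. apply Hx1. rewrite <- e1. apply in_map_iff. exists (x', y'); auto.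
Qed.

(** * Renaming an SLD step *)

(* [ren_conj r th] is [th] transported along [r]: it acts on [t r] as [th] acts on [t]. *)
Definition ren_conj (r : ren) (th : subst) : subst :=
  fun x => tsubst (ren_subst r) (th (ren_inv r x)).

Lemma tsubst_ren_conj r th t :
  tsubst (ren_conj r th) (tsubst (ren_subst r) t) = tsubst (ren_subst r) (tsubst th t).
Proof.
  rewrite !tsubst_comp. apply tsubst_ext. intros x _.
  unfold scomp, ren_conj, ren_subst; simpl. rewrite ren_funK. reflexivity.
Qed.

Lemma asubst_ren_conj r th a :
  asubst (ren_conj r th) (asubst (ren_subst r) a) = asubst (ren_subst r) (asubst th a).
Proof.
  unfold asubst; simpl. f_equal. rewrite !map_map. apply map_ext. apply tsubst_ren_conj.
Qed.

Lemma gsubst_ren_conj r th g :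
  gsubst (ren_conj r th) (gsubst (ren_subst r) g) = gsubst (ren_subst r) (gsubst th g).
Proof. unfold gsubst. rewrite !map_map. apply map_ext. apply asubst_ren_conj. Qed.

Lemma mgu_ren_conj r th a1 a2 : mgu th a1 a2 ->
  mgu (ren_conj r th) (asubst (ren_subst r) a1) (asubst (ren_subst r) a2).
Proof.
  intros [Hu Hg]. split.
  - unfold unifier. rewrite !asubst_ren_conj, Hu. reflexivity.
  - intros sg Hsg. destruct (Hg (scomp sg (ren_subst r))) as [dl Hdl].
    { unfold unifier in *. rewrite <- !asubst_comp. exact Hsg. }
    exists (scomp dl (ren_subst (ren_inverse r))). intros x. unfold ren_conj.
    rewrite <- tsubst_comp, tsubst_renK, <- Hdl. unfold scomp, ren_subst; simpl.
    rewrite ren_invK. reflexivity.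
Qed.

Lemma idempotent_ren_conj r th : idempotent th -> idempotent (ren_conj r th).
Proof. intros H x. unfold ren_conj at 2. rewrite tsubst_ren_conj, H. reflexivity. Qed.

Lemma relevant_ren_conj r th a1 a2 : relevant th a1 a2 ->
  relevant (ren_conj r th) (asubst (ren_subst r) a1) (asubst (ren_subst r) a2).
Proof.
  intros H x Hx. unfold ren_conj in *.
  assert (Hne : th (ren_inv r x) <> Var (ren_inv r x)).
  { intros E. apply Hx. rewrite E. simpl. unfold ren_subst. rewrite ren_invK. reflexivity. }
  destruct (H _ Hne) as [H1 H2].
  assert (Hin : forall z, In z (avars a1 ++ avars a2) ->
     In (ren_fun r z) (avars (asubst (ren_subst r) a1) ++ avars (asubst (ren_subst r) a2))).
  { intros z Hz. apply in_app_iff in Hz as [Hz|Hz]; apply in_app_iff; [left|right];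
    apply avars_asubst; exists z; split; auto; simpl; auto. }
  split.
  - rewrite <- (ren_invK r x). apply Hin. auto.
  - intros y Hy. apply tvars_tsubst in Hy as [z [Hz [Hy|[]]]]. subst y. apply Hin. auto.
Qed.

Lemma resolvent_ren G c xi th G' r : resolvent G c xi th G' ->
  resolvent (gsubst (ren_subst r) G) c (scomp (ren_subst r) xi) (ren_conj r th)
            (gsubst (ren_subst r) G').
Proof.
  intros [Hxi [pre [a [post [EG [Hm [Hid [Hrel EG']]]]]]]].
  split; [apply renaming_scomp; auto|].
  exists (gsubst (ren_subst r) pre), (asubst (ren_subst r) a), (gsubst (ren_subst r) post).
  rewrite <- asubst_comp. split; [|split; [|split; [|split]]].
  - rewrite EG, gsubst_app. reflexivity.
  - apply mgu_ren_conj; auto.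
  - apply idempotent_ren_conj; auto.
  - apply relevant_ren_conj; auto.
  - rewrite EG', <- gsubst_ren_conj, !gsubst_app, <- gsubst_comp. reflexivity.
Qed.

(* This is where relevance of the mgu is needed. *)
Lemma resolvent_vars G c xi th G' : resolvent G c xi th G' ->
  (forall y K, In y (gvars (gsubst th K)) ->
     In y (gvars K) \/ In y (gvars G) \/ In y (cvars (csubst xi c))) /\
  (forall y, In y (gvars G') -> In y (gvars G) \/ In y (cvars (csubst xi c))).
Proof.
  intros [Hxi [pre [a [post [EG [Hm [Hid [Hrel EG']]]]]]]].
  assert (Hth : forall y K, In y (gvars (gsubst th K)) ->
     In y (gvars K) \/ In y (gvars G) \/ In y (cvars (csubst xi c))).
  { intros y K Hy. apply gvars_gsubst in Hy as [x [Hx Hy]].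
    destruct (classic (th x = Var x)) as [E|E].
    - rewrite E in Hy. destruct Hy as [<-|[]]. auto.
    - destruct (Hrel x E) as [_ H2]. apply H2, in_app_iff in Hy as [Hy|Hy]; right.
      + right. rewrite cvars_csubst. apply in_app_iff; auto.
      + left. rewrite EG, gvars_app, gvars_cons, !in_app_iff; auto. }
  split; auto. intros y Hy. rewrite EG' in Hy. apply Hth in Hy as [Hy|Hy]; auto.
  rewrite !gvars_app, !in_app_iff in Hy. destruct Hy as [Hy|[Hy|Hy]].
  - left. rewrite EG, gvars_app, gvars_cons, !in_app_iff; auto.
  - right. rewrite cvars_csubst, in_app_iff; auto.
  - left. rewrite EG, gvars_app, gvars_cons, !in_app_iff; auto.
Qed.

Lemma length_inst_upto G0 th j : length (inst_upto G0 th j) = length G0.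
Proof. induction j; simpl; auto. rewrite length_gsubst; auto. Qed.

(** * Function-free goals up to renaming *)

Definition flat_term (Cs : list nat) (t : term) : Prop :=
  (exists x, t = Var x) \/ (exists f, In f Cs /\ t = Fn f []).
Definition flat_atom Cs (a : atom) : Prop := Forall (flat_term Cs) (aargs a).

Definition flatten_term (Cs : list nat) (t : term) : term :=
  match t with
  | Var x => Var x
  | Fn f [] => if in_dec Nat.eq_dec f Cs then Fn f [] else Var 0
  | Fn _ _ => Var 0
  end.

Lemma flatten_tsubst Cs th t : flat_term Cs t ->
  flatten_term Cs (tsubst th t) = tsubst (fun x => flatten_term Cs (th x)) t.
Proof. intros [[x ->]|[f [Hf ->]]]; simpl; auto. destruct in_dec; tauto. Qed.

(* Flattening an mgu of flat atoms gives another unifier, which must factor through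
   the mgu; hence the mgu itself only maps variables to flat terms. *)
Lemma mgu_flat Cs th a1 a2 : flat_atom Cs a1 -> flat_atom Cs a2 -> mgu th a1 a2 ->
  forall x, flat_term Cs (th x).
Proof.
  intros F1 F2 [Hu Hg] x. unfold flat_atom in F1, F2. rewrite Forall_forall in F1, F2.
  destruct (Hg (fun x => flatten_term Cs (th x))) as [dl Hdl].
  { unfold unifier, asubst in *. injection Hu as Hp Hm. simpl. f_equal; auto.
    transitivity (map (flatten_term Cs) (map (tsubst th) (aargs a1))).
    - rewrite map_map. apply map_ext_in. intros t Ht. symmetry. apply flatten_tsubst; auto.
    - rewrite Hm, map_map. apply map_ext_in. intros t Ht. apply flatten_tsubst; auto. }
  specialize (Hdl x). destruct (th x) as [y|f [|u ts]] eqn:E; simpl in Hdl.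
  - left; eauto.
  - destruct in_dec; [right; eauto | discriminate].
  - discriminate.
Qed.

Lemma flat_tsubst Cs th t : (forall x, flat_term Cs (th x)) -> flat_term Cs t ->
  flat_term Cs (tsubst th t).
Proof. intros H [[x ->]|[f [Hf ->]]]; simpl; auto. right; eauto. Qed.

Lemma flat_asubst Cs th a : (forall x, flat_term Cs (th x)) -> flat_atom Cs a ->
  flat_atom Cs (asubst th a).
Proof.
  intros H Ha. unfold flat_atom, asubst in *; simpl. rewrite Forall_forall in *.
  intros t Ht. apply in_map_iff in Ht as [u [<- Hu]]. apply flat_tsubst; auto.
Qed.

Lemma flat_ren_subst Cs r x : flat_term Cs (ren_subst r x).
Proof. left; unfold ren_subst; eauto. Qed.

Lemma length_tvars_flat Cs t : flat_term Cs t -> length (tvars t) <= 1.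
Proof. intros [[x ->]|[f [_ ->]]]; simpl; auto. Qed.

Lemma length_avars_flat Cs a : flat_atom Cs a -> length (avars a) <= length (aargs a).
Proof.
  unfold flat_atom, avars. induction (aargs a) as [|t ts IH]; intros Hf; simpl; auto.
  inversion Hf; subst. rewrite length_app.
  pose proof (length_tvars_flat Cs t ltac:(assumption)). specialize (IH ltac:(assumption)). lia.
Qed.

Lemma pigeonhole {X} (U : list X) (f : nat -> X) : (forall i, In (f i) U) ->
  exists i j, i < j /\ f i = f j.
Proof.
  intros H. apply NNPP. intros Hn.
  assert (ND : NoDup (map f (seq 0 (S (length U))))).
  { apply NoDup_map_NoDup_ForallPairs; [|apply seq_NoDup].
    intros a b Ha Hb E. destruct (lt_eq_lt_dec a b) as [[L|L]|L]; auto;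
    exfalso; apply Hn; eauto. }
  apply NoDup_incl_length with (l' := U) in ND.
  - rewrite length_map, length_seq in ND. lia.
  - intros x Hx. apply in_map_iff in Hx as [i [<- _]]. auto.
Qed.

Lemma frequently_subseq (Q : nat -> Prop) : (forall m, exists j, m <= j /\ Q j) ->
  exists idx : nat -> nat, (forall k1 k2, k1 < k2 -> idx k1 < idx k2) /\ forall k, Q (idx k).
Proof.
  intros HQ.
  set (nx := fun m => proj1_sig (constructive_indefinite_description _ (HQ m))).
  assert (Hnx : forall m, m <= nx m /\ Q (nx m)).
  { intros m. unfold nx. destruct constructive_indefinite_description; simpl; auto. }
  set (idx := fix idx k := match k with 0 => nx 0 | S k => nx (S (idx k)) end).
  assert (Hstep : forall k, idx k < idx (S k)).
  { intros k. simpl. pose proof (Hnx (S (idx k))). lia. }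
  exists idx. split.
  - intros k1 k2 Lt. induction Lt; [apply Hstep|]. pose proof (Hstep m). lia.
  - intros [|k]; apply Hnx.
Qed.

Fixpoint lists_upto {X} (n : nat) (U : list X) : list (list X) :=
  match n with
  | 0 => [[]]
  | S n => [] :: flat_map (fun x => map (cons x) (lists_upto n U)) U
  end.

Lemma lists_upto_in {X} n (U : list X) l : length l <= n -> (forall x, In x l -> In x U) ->
  In l (lists_upto n U).
Proof.
  revert l; induction n as [|n IH]; intros [|x l] Hl Hin; simpl in *; auto; try lia.
  right. apply in_flat_map. exists x. split; auto. apply in_map. apply IH; auto. lia.
Qed.

Lemma combine_seq_in (vs : list var) k x : In x vs ->
  exists i, In (x, i) (combine vs (seq k (length vs))) /\ k <= i < k + length vs.
Proof.
  revert k; induction vs as [|v vs IH]; intros k Hx; simpl in *; [contradiction|].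
  destruct Hx as [<-|Hx].
  - exists k; split; auto; lia.
  - destruct (IH (S k) Hx) as [i [Hi Li]]. exists i; split; auto; lia.
Qed.

Lemma map_fst_combine_seq (vs : list var) k : map fst (combine vs (seq k (length vs))) = vs.
Proof. revert k; induction vs; simpl; intros; f_equal; auto. Qed.

Lemma map_snd_combine_seq (vs : list var) k :
  map snd (combine vs (seq k (length vs))) = seq k (length vs).
Proof. revert k; induction vs; simpl; intros; f_equal; auto. Qed.

Lemma length_nodup_le (l : list var) : length (nodup Nat.eq_dec l) <= length l.
Proof.
  apply NoDup_incl_length; [apply NoDup_nodup|]. intros y Hy. apply nodup_In in Hy. exact Hy.
Qed.

Lemma canonical_ren_ex (H : goal) : exists r : ren, forall x, In x (gvars H) ->
  ren_fun r x < length (nodup Nat.eq_dec (gvars H)).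
Proof.
  set (vs := nodup Nat.eq_dec (gvars H)).
  destruct (ren_extend (combine vs (seq 0 (length vs)))) as [r Hr].
  - rewrite map_fst_combine_seq. apply NoDup_nodup.
  - rewrite map_snd_combine_seq. apply seq_NoDup.
  - exists r. intros x Hx. assert (Hv : In x vs) by (apply nodup_In; auto).
    destruct (combine_seq_in vs 0 x Hv) as [i [Hi Li]].
    apply Hr in Hi. simpl in Hi. rewrite Hi. exact (proj2 Li).
Qed.

Definition canonical_ren (H : goal) : ren :=
  proj1_sig (constructive_indefinite_description _ (canonical_ren_ex H)).

Lemma canonical_ren_lt H x :
  In x (gvars H) -> ren_fun (canonical_ren H) x < length (nodup Nat.eq_dec (gvars H)).
Proof. unfold canonical_ren. destruct constructive_indefinite_description; simpl; auto. Qed.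

Definition canonical (H : goal) : goal := gsubst (ren_subst (canonical_ren H)) H.

Lemma canonical_eq H1 H2 : canonical H1 = canonical H2 ->
  exists r, H2 = gsubst (ren_subst r) H1.
Proof.
  unfold canonical. intros E. exists (ren_comp (ren_inverse (canonical_ren H2)) (canonical_ren H1)).
  rewrite <- ren_subst_comp, <- gsubst_comp, E, gsubst_renK. reflexivity.
Qed.

Section FiniteSignature.
Variables (Cs Ps : list nat) (Ar : nat).

Definition sig_atom (a : atom) : Prop :=
  flat_atom Cs a /\ In (apred a) Ps /\ length (aargs a) <= Ar.
Definition sig_goal (g : goal) : Prop := Forall sig_atom g.

Lemma sig_asubst th a : (forall x, flat_term Cs (th x)) -> sig_atom a -> sig_atom (asubst th a).
Proof.
  intros H [H1 [H2 H3]]. split; [apply flat_asubst; auto|]. unfold asubst; simpl.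
  rewrite length_map; auto.
Qed.

Lemma sig_gsubst th g : (forall x, flat_term Cs (th x)) -> sig_goal g -> sig_goal (gsubst th g).
Proof.
  intros H Hg. unfold sig_goal, gsubst in *. rewrite Forall_forall in *.
  intros a Ha. apply in_map_iff in Ha as [u [<- Hu]]. apply sig_asubst; auto.
Qed.

Lemma length_gvars_sig g : sig_goal g -> length (gvars g) <= length g * Ar.
Proof.
  induction g as [|a g IH]; intros Hg; simpl; auto.
  inversion Hg as [|? ? [Ha1 [_ Ha3]] Hg']; subst. rewrite length_app.
  pose proof (length_avars_flat Cs a Ha1). specialize (IH Hg'). lia.
Qed.

Definition small_terms (M : nat) : list term :=
  map Var (seq 0 M) ++ map (fun f => Fn f []) Cs.
Definition small_atoms (M : nat) : list atom :=
  flat_map (fun p => map (mkAtom p) (lists_upto Ar (small_terms M))) Ps.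
Definition small_goals (L M : nat) : list goal := lists_upto L (small_atoms M).

Lemma canonical_in_small_goals L H : sig_goal H -> length H <= L ->
  In (canonical H) (small_goals L (L * Ar)).
Proof.
  intros Hw HL. unfold canonical, small_goals. apply lists_upto_in.
  { rewrite length_gsubst; auto. }
  intros b Hb. unfold gsubst in Hb. apply in_map_iff in Hb as [a [<- Ha]].
  destruct (proj1 (Forall_forall _ _) Hw a Ha) as [G1 [G2 G3]].
  unfold small_atoms. apply in_flat_map. exists (apred a). split; auto.
  unfold asubst. apply in_map. apply lists_upto_in; [rewrite length_map; auto|].
  intros t Ht. apply in_map_iff in Ht as [u [<- Hu]]. unfold flat_atom in G1.
  rewrite Forall_forall in G1. unfold small_terms. rewrite in_app_iff.
  destruct (G1 u Hu) as [[x ->]|[f [Hf ->]]]; simpl.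
  - left. unfold ren_subst. apply in_map, in_seq.
    assert (Hx : In x (gvars H)).
    { unfold gvars, avars. apply in_flat_map. exists a. split; auto.
      apply in_flat_map. exists (Var x). simpl; auto. }
    pose proof (canonical_ren_lt H x Hx). pose proof (length_gvars_sig H Hw).
    pose proof (length_nodup_le (gvars H)).
    assert (length H * Ar <= L * Ar) by (apply Nat.mul_le_mono_r; auto). lia.
  - right. apply in_map_iff. eauto.
Qed.

(* Pigeonhole: over a finite signature there are finitely many goals of bounded length up to
   renaming. *)
Lemma frequently_bounded_variant (Hs : nat -> goal) L :
  (forall j, sig_goal (Hs j)) -> (forall m, exists j, m <= j /\ length (Hs j) <= L) ->
  exists i j r, i < j /\ Hs j = gsubst (ren_subst r) (Hs i).
Proof.
  intros Hw Hinf. destruct (frequently_subseq _ Hinf) as [idx [Hmono Hlen]].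
  destruct (pigeonhole (small_goals L (L * Ar)) (fun k => canonical (Hs (idx k))))
    as [k1 [k2 [Lt E]]].
  { intros k. apply canonical_in_small_goals; auto. }
  apply canonical_eq in E as [r Er]. exists (idx k1), (idx k2), r. auto.
Qed.

End FiniteSignature.

(** * Resolving in a larger goal *)

Inductive subl : goal -> goal -> Prop :=
| subl_nil : subl [] []
| subl_keep a N G : subl N G -> subl (a :: N) (a :: G)
| subl_drop a N G : subl N G -> subl N (a :: G).

Lemma sublist_subl N G D : sublist N G D -> subl N G.
Proof. induction 1; constructor; auto. Qed.

Lemma subl_refl G : subl G G.
Proof. induction G; constructor; auto. Qed.

Lemma subl_trans A B C : subl A B -> subl B C -> subl A C.
Proof.
  intros H1 H2. revert A H1. induction H2; intros A0 H1; auto.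
  - inversion H1; subst; constructor; auto.
  - constructor; auto.
Qed.

Lemma subl_app a b c d : subl a b -> subl c d -> subl (a ++ c) (b ++ d).
Proof. induction 1; intros; simpl; try constructor; auto. Qed.

Lemma subl_gsubst s a b : subl a b -> subl (gsubst s a) (gsubst s b).
Proof. induction 1; simpl; constructor; auto. Qed.

Lemma subl_length a b : subl a b -> length a <= length b.
Proof. induction 1; simpl; lia. Qed.

Lemma subl_in a b x : subl a b -> In x a -> In x b.
Proof. induction 1; simpl; intuition. Qed.

Lemma subl_split pre a post G : subl (pre ++ a :: post) G ->
  exists pre' post', G = pre' ++ a :: post' /\ subl pre pre' /\ subl post post'.
Proof.
  intros H. remember (pre ++ a :: post) as N. revert pre HeqN. induction H; intros pre E.
  - destruct pre; discriminate.
  - destruct pre as [|b pre]; simpl in E; injection E as E1 E2; subst.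
    + exists [], G. split; auto. split; [constructor|auto].
    + destruct (IHsubl pre eq_refl) as [pre' [post' [-> [H1 H2]]]].
      exists (b :: pre'), post'. split; auto. split; [constructor|]; auto.
  - destruct (IHsubl pre E) as [pre' [post' [-> [H1 H2]]]].
    exists (a0 :: pre'), post'. split; auto. split; [constructor|]; auto.
Qed.

Lemma resolvent_subl N G c xi th N' : subl N G -> resolvent N c xi th N' ->
  exists G', resolvent G c xi th G' /\ subl N' G'.
Proof.
  intros Hs [Hxi [pre [a [post [E [Hm [Hi [Hr E']]]]]]]]. rewrite E in Hs.
  apply subl_split in Hs as [pre' [post' [EG [H1 H2]]]].
  exists (gsubst th (pre' ++ gsubst xi (cbody c) ++ post')). split.
  - split; auto. exists pre', a, post'. auto.
  - rewrite E'. apply subl_gsubst, subl_app, subl_app; auto using subl_refl.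
Qed.

Lemma rsld_simulated_by_sld P G0 Gs Ns al c xi th : inf_RSLD P G0 Gs Ns al c xi th ->
  exists Gs', inf_SLD P G0 Gs' c xi th /\ forall j, subl (Ns j) (Gs' j).
Proof.
  intros [HG0 HR].
  assert (Hstep : forall j G, exists G', subl (Gs j) G ->
    resolvent G (c j) (xi j) (th j) G' /\ subl (Gs (S j)) G').
  { intros j G. destruct (HR j) as [[D [HD _]] [_ [_ Hres]]].
    destruct (classic (subl (Gs j) G)) as [Hs|Hs]; [|exists []; contradiction].
    destruct (resolvent_subl _ _ _ _ _ _ (subl_trans _ _ _ (sublist_subl _ _ _ HD) Hs) Hres)
      as [G' HG']. exists G'; auto. }
  set (step := fun j G => proj1_sig (constructive_indefinite_description _ (Hstep j G))).
  assert (Hspec : forall j G, subl (Gs j) G ->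
    resolvent G (c j) (xi j) (th j) (step j G) /\ subl (Gs (S j)) (step j G)).
  { intros j G. unfold step. destruct constructive_indefinite_description; simpl; auto. }
  set (Gs' := fix Gs' j := match j with 0 => G0 | S j => step j (Gs' j) end).
  assert (Hsub : forall j, subl (Gs j) (Gs' j)).
  { induction j; simpl; [rewrite HG0; apply subl_refl | apply Hspec; auto]. }
  exists Gs'. split.
  - split; [reflexivity|]. intros j. destruct (HR j) as [_ [Hc [Hsa _]]].
    split; auto. split; auto. apply Hspec, Hsub.
  - intros j. destruct (HR j) as [[D [HD _]] _].
    exact (subl_trans _ _ _ (sublist_subl _ _ _ HD) (Hsub j)).
Qed.

(** * Reduced goals that are short infinitely often *)

Definition program_atoms (P : program) (G0 : goal) : goal :=
  G0 ++ flat_map (fun cl => chead cl :: cbody cl) P.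
Definition term_consts (t : term) : list nat := match t with Fn f _ => [f] | _ => [] end.
Definition program_consts P G0 : list nat :=
  flat_map (fun a => flat_map term_consts (aargs a)) (program_atoms P G0).
Definition program_preds P G0 : list nat := map apred (program_atoms P G0).
Definition program_arity P G0 : nat :=
  list_max (map (fun a => length (aargs a)) (program_atoms P G0)).

Lemma le_list_max x l : In x l -> x <= list_max l.
Proof.
  intros Hx. destruct (list_max_le l (list_max l)) as [Hl _].
  specialize (Hl (le_n _)). rewrite Forall_forall in Hl. auto.
Qed.

Lemma app_inj_length {X} (l1 l2 l3 l4 : list X) :
  l1 ++ l2 = l3 ++ l4 -> length l1 = length l3 -> l1 = l3 /\ l2 = l4.
Proof.
  revert l3; induction l1 as [|a l1 IH]; intros [|b l3] E L; simpl in *; try discriminate; auto.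
  injection E as -> E. injection L as L. destruct (IH _ E L). subst; auto.
Qed.

Section FrequentlyBounded.
Variables (P : program) (G0 : goal).
Hypothesis HP : ff_program P.
Hypothesis HG : ff_goal G0.
Variables (Gs Ns : nat -> goal) (al : nat -> subst) (c : nat -> clause) (xi th : nat -> subst).
Hypothesis HR : inf_RSLD P G0 Gs Ns al c xi th.

Let sig_goal_P := sig_goal (program_consts P G0) (program_preds P G0) (program_arity P G0).

Lemma sig_atom_of_ff a : In a (program_atoms P G0) -> ff_atom a ->
  sig_atom (program_consts P G0) (program_preds P G0) (program_arity P G0) a.
Proof.
  intros Hin Hff. split; [|split].
  - unfold flat_atom. unfold ff_atom in Hff. rewrite Forall_forall in *. intros t Ht.
    specialize (Hff t Ht). destruct t as [x|f ts]; [left; eauto|]. simpl in Hff; subst.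
    right. exists f. split; auto. unfold program_consts. apply in_flat_map. exists a.
    split; auto. apply in_flat_map. exists (Fn f []). simpl; auto.
  - apply in_map; auto.
  - apply le_list_max, in_map_iff; eauto.
Qed.

Lemma sig_goal_of_ff g : incl g (program_atoms P G0) -> ff_goal g -> sig_goal_P g.
Proof.
  intros Hin Hff. unfold sig_goal_P, sig_goal, ff_goal in *. rewrite Forall_forall in *.
  intros a Ha. apply sig_atom_of_ff; auto.
Qed.

Lemma sig_goal_subl a b : subl a b -> sig_goal_P b -> sig_goal_P a.
Proof.
  intros H Hb. unfold sig_goal_P, sig_goal in *. rewrite Forall_forall in *.
  intros x Hx. apply Hb. eapply subl_in; eauto.
Qed.

Lemma sig_goal_rsld j : sig_goal_P (Gs j) /\ sig_goal_P (inst_upto G0 th j).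
Proof.
  induction j as [|j [IH1 IH2]].
  - destruct HR as [H0 _]. rewrite H0.
    split; apply sig_goal_of_ff; auto; intros a Ha; apply in_app_iff; auto.
  - destruct HR as [_ H]. destruct (H j) as [[D [HD _]] [Hc [_ Hres]]].
    destruct Hres as [Hxi [pre [a [post [E [Hm [_ [_ E']]]]]]]].
    pose proof (sig_goal_subl _ _ (sublist_subl _ _ _ HD) IH1) as HN.
    rewrite E in HN. unfold sig_goal_P, sig_goal in HN. rewrite Forall_app in HN.
    destruct HN as [Hpre HN]. inversion HN as [|? ? Ha Hpost]; subst.
    destruct (renaming_ren _ Hxi) as [r Er].
    unfold ff_program in HP. rewrite Forall_forall in HP. destruct (HP _ Hc) as [Hh Hb].
    assert (Hcl : incl (chead (c j) :: cbody (c j)) (program_atoms P G0)).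
    { intros b Hb'. apply in_app_iff; right. apply in_flat_map. eauto. }
    pose proof (sig_goal_of_ff (chead (c j) :: cbody (c j)) Hcl (Forall_cons _ Hh Hb)) as Hcj.
    inversion Hcj as [|? ? Wh Wb]; subst.
    assert (Hflat : forall x, flat_term (program_consts P G0) (th j x)).
    { apply (mgu_flat _ (th j) (asubst (xi j) (chead (c j))) a); auto.
      - rewrite Er. apply flat_asubst; [apply flat_ren_subst | apply Wh].
      - apply Ha. }
    split.
    + rewrite E'. apply sig_gsubst; auto. unfold sig_goal. rewrite !Forall_app.
      split; auto. split; auto. rewrite Er. apply sig_gsubst; auto using flat_ren_subst.
    + simpl. apply sig_gsubst; auto.
Qed.

Lemma rsld_pruned_of_frequently_bounded L :
  (forall m, exists j, m <= j /\ length (Ns j) <= L) -> EVR_L_prunes G0 th Ns.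
Proof.
  intros Hinf.
  destruct (frequently_bounded_variant (program_consts P G0) (program_preds P G0)
             (program_arity P G0) (fun j => inst_upto G0 th j ++ Ns j) (length G0 + L))
    as [i [j [r [Lij E]]]].
  - intros j. unfold sig_goal. rewrite Forall_app. split; [apply sig_goal_rsld|].
    destruct HR as [_ H]. destruct (H j) as [[D [HD _]] _].
    apply (sig_goal_subl _ _ (sublist_subl _ _ _ HD)), sig_goal_rsld.
  - intros m. destruct (Hinf m) as [j [Hj Lj]]. exists j. split; auto.
    rewrite length_app, length_inst_upto. lia.
  - rewrite gsubst_app in E. apply app_inj_length in E as [E1 E2].
    + exists i, j, (ren_subst r). split; auto. split; [apply renaming_ren_subst | auto].
    + rewrite length_gsubst, !length_inst_upto. reflexivity.
Qed.

End FrequentlyBounded.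

(** * SLD derivations with diverging goal lengths *)

Definition diverges (f : nat -> nat) : Prop := forall n, exists m, forall j, m <= j -> n < f j.

Lemma bounded_ex_greatest (Q : nat -> Prop) m :
  (exists j, Q j /\ j < m) -> (forall j, Q j -> j < m) ->
  exists j, Q j /\ forall j', Q j' -> j' <= j.
Proof.
  induction m as [|m IH]; intros [j [Hj Lj]] Hb; [lia|].
  destruct (classic (Q m)) as [Qm|Qm].
  - exists m; split; auto. intros j' Hj'. specialize (Hb _ Hj'). lia.
  - apply IH.
    + exists j; split; auto. assert (j <> m) by (intro; subst; auto). lia.
    + intros j' Hj'. specialize (Hb _ Hj'). assert (j' <> m) by (intro; subst; auto). lia.
Qed.

Lemma ren_extend_fresh (sg : ren) (Av Vs : list var) (B : nat) :
  (forall x, In x Av -> ren_fun sg x < B) -> (forall v, In v Vs -> ~ In v Av) ->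
  exists p : ren, (forall x, In x Av -> ren_fun p x = ren_fun sg x) /\
    (forall v, In v Vs -> B <= ren_fun p v < B + length Vs).
Proof.
  intros HA HV. set (A' := nodup Nat.eq_dec Av). set (V' := nodup Nat.eq_dec Vs).
  destruct (ren_extend (map (fun a => (a, ren_fun sg a)) A' ++ combine V' (seq B (length V'))))
    as [p Hp].
  - rewrite map_app, map_map. simpl. rewrite map_id, map_fst_combine_seq.
    apply NoDup_app; try apply NoDup_nodup. intros a Ha Hb.
    apply nodup_In in Ha, Hb. apply (HV a); auto.
  - rewrite map_app, map_map. simpl. rewrite map_snd_combine_seq. apply NoDup_app.
    + apply NoDup_map_NoDup_ForallPairs; [|apply NoDup_nodup].
      intros a b _ _. apply ren_fun_inj.
    + apply seq_NoDup.
    + intros y Hy Hy'. apply in_map_iff in Hy as [a [<- Ha]]. apply in_seq in Hy'.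
      apply nodup_In in Ha. specialize (HA _ Ha). lia.
  - exists p. split.
    + intros x Hx. apply (Hp (x, ren_fun sg x)). apply in_app_iff; left.
      apply in_map_iff. exists x; split; auto. apply nodup_In; auto.
    + intros v Hv. assert (Hv' : In v V') by (apply nodup_In; auto).
      destruct (combine_seq_in V' B v Hv') as [i [Hi Li]].
      pose proof (Hp (v, i) (proj2 (in_app_iff _ _ _) (or_intror Hi))) as E. simpl in E.
      rewrite E. split; [apply Li|]. eapply Nat.lt_le_trans; [apply Li|].
      apply Nat.add_le_mono_l, length_nodup_le.
Qed.

Section Shortcut.
Variables (P : program) (G0 : goal).
Variables (Gs : nat -> goal) (c : nat -> clause) (xi th : nat -> subst).
Hypothesis HS : inf_SLD P G0 Gs c xi th.
Hypothesis Hgrow : diverges (fun j => length (Gs j)).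

Let inst j := inst_upto G0 th j.
Let clause_vars j := cvars (csubst (xi j) (c j)).
Let active_vars j := gvars (inst j) ++ gvars (Gs j).

Lemma active_vars_origin j x : In x (active_vars j) ->
  In x (gvars G0) \/ exists k, k < j /\ In x (clause_vars k).
Proof.
  induction j as [|j IH]; intros Hx; unfold active_vars in *; simpl in Hx.
  - destruct HS as [H0 _]. rewrite H0 in Hx. apply in_app_iff in Hx as [|]; auto.
  - destruct HS as [_ Hj]. destruct (Hj j) as [_ [_ Hr]].
    destruct (resolvent_vars _ _ _ _ _ Hr) as [Hth HG'].
    assert (Hold : In x (active_vars j) -> In x (gvars G0) \/
                   exists k, k < S j /\ In x (clause_vars k)).
    { intros Ha. destruct (IH Ha) as [|[k [Lk Hk]]]; [left; auto | right; exists k; auto]. }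
    unfold active_vars in Hold. apply in_app_iff in Hx as [Hx|Hx].
    + apply Hth in Hx as [Hx|[Hx|Hx]]; auto using in_or_app. right. exists j; auto.
    + apply HG' in Hx as [Hx|Hx]; auto using in_or_app. right. exists j; auto.
Qed.

Lemma clause_vars_fresh j v : In v (clause_vars j) -> ~ In v (active_vars j).
Proof.
  intros Hv Ha. destruct HS as [_ Hj]. destruct (Hj j) as [_ [Hsa _]].
  destruct (Hsa v Hv) as [H1 H2]. apply active_vars_origin in Ha as [Ha|[k [Lk Hk]]]; auto.
  eapply H2; eauto.
Qed.

Definition variant_states j1 j2 := exists r,
  inst j2 = gsubst (ren_subst r) (inst j1) /\ Gs j2 = gsubst (ren_subst r) (Gs j1).

Lemma variant_states_refl j : variant_states j j.
Proof. exists ren_id. split; symmetry; apply gsubst_var. Qed.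

Lemma variant_states_trans j1 j2 j3 :
  variant_states j1 j2 -> variant_states j2 j3 -> variant_states j1 j3.
Proof.
  intros [r1 [E1 F1]] [r2 [E2 F2]]. exists (ren_comp r2 r1).
  rewrite <- ren_subst_comp, <- !gsubst_comp, <- E1, <- F1. auto.
Qed.

Lemma variant_states_length j1 j2 : variant_states j1 j2 -> length (Gs j1) = length (Gs j2).
Proof. intros [r [_ E]]. rewrite E, length_gsubst. reflexivity. Qed.

(* Goal lengths diverge, so each state recurs up to renaming only finitely often. *)
Lemma last_variant_ex l :
  exists j, variant_states l j /\ forall j', variant_states l j' -> j' <= j.
Proof.
  destruct (Hgrow (length (Gs l))) as [m Hm].
  apply bounded_ex_greatest with (m := S (l + m)).
  - exists l; split; [apply variant_states_refl | lia].
  - intros j Hj. apply variant_states_length in Hj.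
    destruct (le_lt_dec m j) as [L|L]; [specialize (Hm j L)|]; lia.
Qed.

Definition last_variant l := proj1_sig (constructive_indefinite_description _ (last_variant_ex l)).

Lemma last_variant_spec l :
  variant_states l (last_variant l) /\ forall j', variant_states l j' -> j' <= last_variant l.
Proof. unfold last_variant. destruct constructive_indefinite_description; simpl; auto. Qed.

Lemma le_last_variant l : l <= last_variant l.
Proof. apply last_variant_spec, variant_states_refl. Qed.

Definition last_variant_ren l : ren :=
  proj1_sig (constructive_indefinite_description _ (proj1 (last_variant_spec l))).

Lemma last_variant_ren_spec l :
  inst (last_variant l) = gsubst (ren_subst (last_variant_ren l)) (inst l) /\
  Gs (last_variant l) = gsubst (ren_subst (last_variant_ren l)) (Gs l).
Proof. unfold last_variant_ren. destruct constructive_indefinite_description; simpl; auto. Qed.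

(* The shortcut derivation follows the step taken at [st_index] and then jumps to the last
   variant of the resulting state.  [st_ren] renames the actual state into the shortcut one,
   whose variables all lie below [st_bound]; the clause variables of each step are sent above
   that bound, which keeps the shortcut derivation standardised apart. *)
Record state := mkState { st_index : nat; st_ren : ren; st_bound : nat }.

Lemma fresh_ren_ex (s : state) : exists p : ren,
  ((forall x, In x (active_vars (st_index s)) -> ren_fun (st_ren s) x < st_bound s) ->
   (forall x, In x (active_vars (st_index s)) -> ren_fun p x = ren_fun (st_ren s) x) /\
   (forall v, In v (clause_vars (st_index s)) ->
      st_bound s <= ren_fun p v < st_bound s + length (clause_vars (st_index s)))).
Proof.
  destruct (classic (forall x, In x (active_vars (st_index s)) ->
                       ren_fun (st_ren s) x < st_bound s)) as [H|H].
  - destruct (ren_extend_fresh (st_ren s) _ _ _ H (clause_vars_fresh (st_index s)))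
      as [p Hp].
    exists p; auto.
  - exists ren_id. intros H'. contradiction.
Qed.

Definition fresh_ren (s : state) : ren :=
  proj1_sig (constructive_indefinite_description _ (fresh_ren_ex s)).

Lemma fresh_ren_spec s :
  (forall x, In x (active_vars (st_index s)) -> ren_fun (st_ren s) x < st_bound s) ->
  (forall x, In x (active_vars (st_index s)) -> ren_fun (fresh_ren s) x = ren_fun (st_ren s) x) /\
  (forall v, In v (clause_vars (st_index s)) ->
     st_bound s <= ren_fun (fresh_ren s) v < st_bound s + length (clause_vars (st_index s))).
Proof. unfold fresh_ren. destruct constructive_indefinite_description; simpl; auto. Qed.

Definition next_state (s : state) : state :=
  mkState (last_variant (S (st_index s)))
    (ren_comp (fresh_ren s) (ren_inverse (last_variant_ren (S (st_index s)))))
    (st_bound s + length (clause_vars (st_index s))).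

Definition init_state : state :=
  mkState (last_variant 0) (ren_inverse (last_variant_ren 0)) (S (list_max (gvars G0))).

Fixpoint state_at (k : nat) : state :=
  match k with 0 => init_state | S k => next_state (state_at k) end.

Definition sc_goal k := gsubst (ren_subst (st_ren (state_at k))) (Gs (st_index (state_at k))).
Definition sc_clause k := c (st_index (state_at k)).
Definition sc_ren k := scomp (ren_subst (fresh_ren (state_at k))) (xi (st_index (state_at k))).
Definition sc_mgu k := ren_conj (fresh_ren (state_at k)) (th (st_index (state_at k))).
Let sc_inst k := inst_upto G0 sc_mgu k.

Lemma st_bound_mono k1 k2 : k1 <= k2 -> st_bound (state_at k1) <= st_bound (state_at k2).
Proof. induction 1; auto. simpl. lia. Qed.

Lemma st_index_lt k1 k2 : k1 < k2 -> st_index (state_at k1) < st_index (state_at k2).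
Proof.
  assert (Hstep : forall k, st_index (state_at k) < st_index (state_at (S k))).
  { intros k. simpl. pose proof (le_last_variant (S (st_index (state_at k)))). lia. }
  induction 1; [apply Hstep|]. pose proof (Hstep m). lia.
Qed.

Lemma lt_st_bound_G0 k x : In x (gvars G0) -> x < st_bound (state_at k).
Proof.
  intros Hx. pose proof (st_bound_mono 0 k (Nat.le_0_l _)). simpl in H.
  pose proof (le_list_max x (gvars G0) Hx). lia.
Qed.

Definition shortcut_inv k :=
  sc_inst k = gsubst (ren_subst (st_ren (state_at k))) (inst (st_index (state_at k))) /\
  (forall y, In y (gvars (sc_inst k) ++ gvars (sc_goal k)) -> y < st_bound (state_at k)).

Lemma active_ren_lt k : shortcut_inv k -> forall x, In x (active_vars (st_index (state_at k))) ->
  ren_fun (st_ren (state_at k)) x < st_bound (state_at k).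
Proof.
  intros [E Hb] x Hx. apply Hb. unfold active_vars in Hx.
  apply in_app_iff in Hx as [Hx|Hx]; apply in_app_iff.
  - left. rewrite E. apply gvars_ren; eauto.
  - right. unfold sc_goal. apply gvars_ren; eauto.
Qed.

Lemma sc_goal_fresh k : shortcut_inv k ->
  sc_goal k = gsubst (ren_subst (fresh_ren (state_at k))) (Gs (st_index (state_at k))).
Proof.
  intros Hk. destruct (fresh_ren_spec _ (active_ren_lt k Hk)) as [Ha _]. unfold sc_goal.
  apply gsubst_ext. intros x Hx. unfold ren_subst. rewrite Ha; auto.
  unfold active_vars; apply in_app_iff; auto.
Qed.

Lemma sc_inst_fresh k : shortcut_inv k ->
  sc_inst k = gsubst (ren_subst (fresh_ren (state_at k))) (inst (st_index (state_at k))).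
Proof.
  intros Hk. destruct (fresh_ren_spec _ (active_ren_lt k Hk)) as [Ha _]. rewrite (proj1 Hk).
  apply gsubst_ext. intros x Hx. unfold ren_subst. rewrite Ha; auto.
  unfold active_vars; apply in_app_iff; auto.
Qed.

Lemma sc_goal_S k :
  sc_goal (S k) = gsubst (ren_subst (fresh_ren (state_at k))) (Gs (S (st_index (state_at k)))).
Proof.
  unfold sc_goal. simpl. rewrite (proj2 (last_variant_ren_spec _)).
  rewrite <- ren_subst_comp, <- gsubst_comp, gsubst_renK. reflexivity.
Qed.

Lemma sc_inst_S k : shortcut_inv k ->
  sc_inst (S k) = gsubst (ren_subst (fresh_ren (state_at k))) (inst (S (st_index (state_at k)))).
Proof.
  intros Hk. unfold sc_inst. simpl. fold (sc_inst k). rewrite sc_inst_fresh; auto.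
  unfold sc_mgu. rewrite gsubst_ren_conj. reflexivity.
Qed.

Lemma sc_step k : shortcut_inv k ->
  resolvent (sc_goal k) (sc_clause k) (sc_ren k) (sc_mgu k) (sc_goal (S k)).
Proof.
  intros Hk. rewrite sc_goal_fresh, sc_goal_S; auto. apply resolvent_ren.
  destruct HS as [_ Hj]. apply Hj.
Qed.

Lemma shortcut_inv_0 : shortcut_inv 0.
Proof.
  split.
  - unfold sc_inst; simpl. rewrite (proj1 (last_variant_ren_spec 0)), gsubst_renK.
    reflexivity.
  - intros y Hy. unfold sc_inst, sc_goal in Hy. simpl in Hy.
    rewrite (proj2 (last_variant_ren_spec 0)), gsubst_renK in Hy. destruct HS as [H0 _].
    rewrite H0 in Hy. apply lt_st_bound_G0. apply in_app_iff in Hy as [|]; auto.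
Qed.

Lemma shortcut_inv_S k : shortcut_inv k -> shortcut_inv (S k).
Proof.
  intros Hk. split.
  - rewrite sc_inst_S; auto. simpl. rewrite (proj1 (last_variant_ren_spec _)).
    rewrite <- ren_subst_comp, <- gsubst_comp, gsubst_renK. reflexivity.
  - destruct (fresh_ren_spec _ (active_ren_lt k Hk)) as [Ha Hv].
    intros y Hy. rewrite sc_inst_S, sc_goal_S, <- gvars_app, <- gsubst_app in Hy; auto.
    apply gvars_ren in Hy as [x [Hx ->]]. rewrite gvars_app in Hx.
    destruct HS as [_ Hj]. destruct (Hj (st_index (state_at k))) as [_ [_ Hr]].
    destruct (resolvent_vars _ _ _ _ _ Hr) as [Hth HG'].
    assert (Hx' : In x (active_vars (st_index (state_at k))) \/
                  In x (clause_vars (st_index (state_at k)))).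
    { unfold active_vars. apply in_app_iff in Hx as [Hx|Hx].
      - simpl in Hx. apply Hth in Hx as [Hx|[Hx|Hx]]; auto using in_or_app.
      - apply HG' in Hx as [Hx|Hx]; auto using in_or_app. }
    simpl. destruct Hx' as [Hx'|Hx'].
    + rewrite Ha; auto. pose proof (active_ren_lt k Hk x Hx'). lia.
    + specialize (Hv x Hx'). lia.
Qed.

Lemma shortcut_inv_all k : shortcut_inv k.
Proof. induction k; auto using shortcut_inv_0, shortcut_inv_S. Qed.

Lemma shortcut_sld : inf_SLD P G0 sc_goal sc_clause sc_ren sc_mgu.
Proof.
  split.
  - unfold sc_goal. simpl. rewrite (proj2 (last_variant_ren_spec 0)), gsubst_renK. apply HS.
  - intros k. split; [|split].
    + apply HS.
    + intros x Hx. unfold sc_ren, sc_clause in Hx. apply cvars_ren in Hx as [x0 [Hx0 ->]].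
      destruct (fresh_ren_spec _ (active_ren_lt k (shortcut_inv_all k))) as [_ Hv].
      pose proof (Hv x0 Hx0) as Lx. split.
      * intros Hg. pose proof (lt_st_bound_G0 k _ Hg). lia.
      * intros k' Lk' Hin. unfold sc_ren, sc_clause in Hin.
        apply cvars_ren in Hin as [x1 [Hx1 E]].
        destruct (fresh_ren_spec _ (active_ren_lt k' (shortcut_inv_all k'))) as [_ Hv'].
        pose proof (Hv' x1 Hx1). pose proof (st_bound_mono (S k') k Lk'). simpl in *. lia.
    + apply sc_step, shortcut_inv_all.
Qed.

(* A variant pair in the shortcut derivation would give a variant of [last_variant l]
   further along the original derivation. *)
Lemma shortcut_unpruned : ~ EVR_L_prunes G0 sc_mgu sc_goal.
Proof.
  intros [i [j [tau [Lij [Htau [EI EH]]]]]].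
  destruct (renaming_ren _ Htau) as [t ->].
  destruct (shortcut_inv_all i) as [Ei _]. destruct (shortcut_inv_all j) as [Ej _].
  assert (R : variant_states (st_index (state_at i)) (st_index (state_at j))).
  { exists (ren_comp (ren_inverse (st_ren (state_at j))) (ren_comp t (st_ren (state_at i)))).
    rewrite <- !ren_subst_comp, <- !gsubst_comp. split.
    - fold (sc_inst i) (sc_inst j) in EI. rewrite <- Ei, <- EI, Ej, gsubst_renK. reflexivity.
    - unfold sc_goal in EH. rewrite <- EH, gsubst_renK. reflexivity. }
  pose proof (st_index_lt i j Lij) as Lt.
  assert (Hlast : exists l, st_index (state_at i) = last_variant l).
  { destruct i; [exists 0 | exists (S (st_index (state_at i)))]; reflexivity. }
  destruct Hlast as [l El]. rewrite El in R, Lt.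
  pose proof (proj2 (last_variant_spec l) _
    (variant_states_trans _ _ _ (proj1 (last_variant_spec l)) R)). lia.
Qed.

End Shortcut.

Lemma diverging_sld_unpruned P G0 Gs c xi th :
  inf_SLD P G0 Gs c xi th -> diverges (fun j => length (Gs j)) ->
  exists Gs' c' xi' th', inf_SLD P G0 Gs' c' xi' th' /\ ~ EVR_L_prunes G0 th' Gs'.
Proof.
  intros HS Hgrow. do 4 eexists. split.
  - exact (shortcut_sld P G0 Gs c xi th HS Hgrow).
  - exact (shortcut_unpruned P G0 Gs c xi th HS Hgrow).
Qed.

Lemma frequently_bounded_or_diverges (f : nat -> nat) :
  (exists L, forall m, exists j, m <= j /\ f j <= L) \/ diverges f.
Proof.
  destruct (classic (exists L, forall m, exists j, m <= j /\ f j <= L)) as [H|H]; auto.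
  right. intros n. apply NNPP. intros Hn. apply H. exists n. intros m. apply NNPP. intros Hm.
  apply Hn. exists m. intros j Hj. destruct (le_lt_dec (f j) n); [exfalso; eauto | auto].
Qed.

Lemma diverges_le f g : diverges f -> (forall j, f j <= g j) -> diverges g.
Proof.
  intros Hf Hle n. destruct (Hf n) as [m Hm]. exists m. intros j Hj.
  specialize (Hm j Hj). specialize (Hle j). lia.
Qed.

Theorem theoremt1p2p1 (P : program) (G0 : goal) :
  ff_program P -> ff_goal G0 ->
  (forall (Gs : nat -> goal) (c : nat -> clause) (xi th : nat -> subst),
      inf_SLD P G0 Gs c xi th -> EVR_L_prunes G0 th Gs) ->
  forall (Gs Ns : nat -> goal) (al : nat -> subst) (c : nat -> clause)
         (xi th : nat -> subst),
    inf_RSLD P G0 Gs Ns al c xi th -> EVR_L_prunes G0 th Ns.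
Proof.
  intros HP HG Hall Gs Ns al c xi th HR.
  destruct (frequently_bounded_or_diverges (fun j => length (Ns j))) as [[L HL]|Hdiv].
  - exact (rsld_pruned_of_frequently_bounded P G0 HP HG Gs Ns al c xi th HR L HL).
  - exfalso. destruct (rsld_simulated_by_sld _ _ _ _ _ _ _ _ HR) as [Gs' [HS Hsub]].
    destruct (diverging_sld_unpruned P G0 Gs' c xi th HS) as [Gs'' [c' [xi' [th' [HS' Hnp]]]]].
    + apply (diverges_le _ _ Hdiv). intros j. apply subl_length, Hsub.
    + exact (Hnp (Hall _ _ _ _ HS')).
Qed.
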